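(* Let $\lambda=(\lambda_1,\dots,\lambda_l)$ be a partition, $\tau(t)=s_\lambda(t)+\sum_{\lambda<\mu}\xi_\mu s_\mu(t)$ with arbitrary $\xi_\mu\in\mathbb C$, and $0\le k\le l-1$. If $\mathrm{wt}\,\alpha<N_{\lambda,k}$, then $\partial^\alpha\tau\big(\sum_{i=1}^k[x_i]\big)=0$.
   Context: For $t=(t_1,t_2,\dots)$ define $p_m(t)$ by $\exp(\sum_{m\ge1}t_mk^m)=\sum_{m\ge0}p_m(t)k^m$, $p_m=0$ for $m<0$; $s_\mu(t)=\det(p_{\mu_i-i+j}(t))_{1\le i,j\le l}$. $[x]=(x,x^2/2,\dots)$. For $\alpha=(\alpha_1,\alpha_2,\dots)$ with finitely many nonzero entries, $\partial^\alpha=\prod_i(\partial/\partial t_i)^{\alpha_i}$, $\mathrm{wt}\,\alpha=\sum_ii\alpha_i$. $N_{\lambda,k}=\lambda_{k+1}+\dots+\lambda_l$. $\lambda<\mu$ means $\lambda_i\le\mu_i$ for all $i$ and $\lambda\ne\mu$. $\tau$ is a formal series, differentiated termwise, evaluations being formal power series in the $x_i$; for $k=0$ evaluation is at $t=0$. *)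

From HB Require Import structures.
From mathcomp Require Import all_boot all_order all_algebra.
From mathcomp Require Import reals.
From mathcomp Require Import complex.
From mathcomp Require Import mpoly.

Set Implicit Arguments.
Unset Strict Implicit.
Unset Printing Implicit Defensive.

Import Order.TTheory GRing.Theory Num.Theory.
Local Open Scope ring_scope.

Section KP.
Variable C : fieldType.

(* Polynomials in the variables t_1, ..., t_N : the mpoly variable 'X_i
   (i : 'I_N) stands for t_(i+1). *)

(* p_m(t) : coefficient of k^m in exp(sum_{i>=1} t_i k^i).  Since the
   series in k has no constant term, only the powers n <= m of the
   exponential contribute to k^m, so the truncated sum below is exact
   (for m <= N, where t_1..t_m are all present). *)
Definition genF (N : nat) : {poly {mpoly C[N]}} :=
  \sum_(i < N) ('X_i)%:P * 'X^(i.+1).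

Definition pol_p (N m : nat) : {mpoly C[N]} :=
  (\sum_(n < m.+1) ((n`!%:R)^-1)%:MP%:P * genF N ^+ n)`_m.

Definition pol_pz (N : nat) (m : int) : {mpoly C[N]} :=
  match m with Posz n => pol_p N n | Negz _ => 0 end.

Definition schur (N : nat) (mu : seq nat) : {mpoly C[N]} :=
  \det (\matrix_(i < size mu, j < size mu)
          pol_pz N ((nth 0 mu i)%:Z - (i : nat)%:Z + (j : nat)%:Z)).

End KP.

Definition is_partition (s : seq nat) : bool :=
  sorted geq s && all (fun x => 0 < x)%N s.

Definition part_le (lam mu : seq nat) : bool :=
  all (fun i => nth 0 lam i <= nth 0 mu i)%N (iota 0 (size lam)).

(* A partition of D has at most D parts, each <= D; we enumerate them as
   D-tuples of elements of 'I_(D+1), nonincreasing, summing to D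
   (padded with zeros); [strip] recovers the partition. *)
Definition padded_part (D : nat) (m : D.-tuple 'I_D.+1) : bool :=
  sorted geq [seq val i | i <- m] && (sumn [seq val i | i <- m] == D).

Definition strip (D : nat) (m : D.-tuple 'I_D.+1) : seq nat :=
  [seq val i | i <- m & (0 < val i)%N].

Definition Nlk (lam : seq nat) (k : nat) : nat := sumn (drop k lam).

(* wt alpha = sum_i i alpha_i ; alpha_i is the exponent of d/dt_i,
   stored at index i-1 of the multi-index *)
Definition wt (N : nat) (alpha : 'X_{1..N}) : nat :=
  (\sum_(i < N) i.+1 * alpha i)%N.

Section Tau.
Variable C : fieldType.

(* the degree-D homogeneous part of
   tau = s_lambda + sum_{lambda < mu} xi_mu s_mu,
   i.e. sum over partitions mu of D with lambda <= mu of c_mu s_mu,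
   where c_lambda = 1 and c_mu = xi_mu for mu <> lambda. *)
Definition tau_part (lam : seq nat) (xi : seq nat -> C) (N D : nat)
  : {mpoly C[N]} :=
  \sum_(m : D.-tuple 'I_D.+1 | padded_part m && part_le lam (strip m))
     (if strip m == lam then 1 else xi (strip m)) *: schur C N (strip m).

(* the point t = [x_1] + ... + [x_k], i.e. t_m = sum_i x_i^m / m,
   as N polynomials in x_1..x_k (for k = 0 this is t = 0) *)
Definition miwa_pt (N k : nat) : N.-tuple {mpoly C[k]} :=
  [tuple (((j.+1)%:R)^-1)%:MP * \sum_(i < k) 'X_i ^+ j.+1 | j < N].

Definition deriv_eval (N k : nat) (alpha : 'X_{1..N}) (F : {mpoly C[N]})
  : {mpoly C[k]} :=
  (mderivm alpha F) \mPo (miwa_pt N k).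

End Tau.

From HB Require Import structures.
From mathcomp Require Import all_boot all_order all_algebra.
From mathcomp Require Import reals.
From mathcomp Require Import complex.
From mathcomp Require Import mpoly.
From mathcomp Require Import perm ring zify.
Import Order.TTheory GRing.Theory Num.Theory.

(* Since d p_m / d t_j = p_(m-j-1), a t_j-derivative of a determinant
   det (p_(c_i + j))_(i,j < l) is a sum of determinants of the same shape in
   which one index c_i drops by j + 1; so d^alpha s_mu is a combination of such
   determinants with total drop sum_i (mu_i - i - c_i) = wt alpha.
   At t = [x_1] + ... + [x_k], p_m becomes the complete symmetric polynomial
   h_m(x), and prod_i (1 - x_i z) * sum_m h_m z^m = 1 is a linear recursion of
   order k for the h_m.  Hence every row (h_(c + j))_j with c >= 1 - k lies in
   the span of the k rows with c = 0, -1, ..., 1 - k, and a determinant with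
   more than k such rows, or with two equal rows, vanishes.  Otherwise at least
   l - k of the c_i are distinct and <= -k, which forces the total drop to be at
   least mu_(k+1) + ... + mu_l >= N_(lambda,k) > wt alpha. *)

Set Implicit Arguments.
Unset Strict Implicit.
Unset Printing Implicit Defensive.

Local Open Scope ring_scope.

Definition inv_fact (C : unitRingType) (n : nat) : C := (n`!%:R)^-1.

Lemma inv_factS (C : numFieldType) n : inv_fact C n.+1 *+ n.+1 = inv_fact C n.
Proof.
have fact_neq0 : (n`!%:R : C) != 0 by rewrite pnatr_eq0 -lt0n fact_gt0.
by rewrite /inv_fact factS natrM -mulr_natr; field; rewrite fact_neq0 nat1r pnatr_eq0.
Qed.

Section TruncatedExp.
Variables (C : numFieldType) (N : nat).
Local Notation MP := {mpoly C[N]}.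
Local Notation G := (genF C N).

Definition genF_divX : {poly MP} := \sum_(i < N) ('X_i)%:P * 'X^i.

Lemma genF_XM : G = 'X * genF_divX.
Proof.
rewrite /genF /genF_divX mulr_sumr; apply: eq_bigr => i _.
by rewrite exprS mulrCA.
Qed.

Lemma coef_genF_exp n r : (r < n)%N -> (G ^+ n)`_r = 0.
Proof. by move=> rn; rewrite genF_XM exprMn coefXnM rn. Qed.

Definition exp_trunc (M : nat) : {poly MP} :=
  \sum_(n < M) (inv_fact C n)%:MP%:P * G ^+ n.

Lemma coef_exp_trunc M r : (r < M)%N -> (exp_trunc M)`_r = pol_p C N r.
Proof.
elim: M => // M IH; rewrite ltnS leq_eqVlt => /orP [/eqP -> //| rM].
by rewrite /exp_trunc big_ord_recr /= coefD -/(exp_trunc M) IH // coefCM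
  coef_genF_exp // mulr0 addr0.
Qed.

End TruncatedExp.

Section PartialDerivative.
Variables (C : numFieldType) (N : nat) (j : 'I_N).
Local Notation MP := {mpoly C[N]}.
Local Notation G := (genF C N).
Local Notation Dj := (map_poly (mderiv j)).
Implicit Types p q : {poly MP}.

Lemma coef_Dj p i : (Dj p)`_i = mderiv j p`_i.
Proof. by rewrite coef_map_id0 // mderiv0. Qed.

Lemma Dj_mul p q : Dj (p * q) = Dj p * q + p * Dj q.
Proof.
apply/polyP => i; rewrite coef_Dj coefD !coefM raddf_sum -big_split /=.
by apply: eq_bigr => x _; rewrite mderivM !coef_Dj.
Qed.

Lemma Dj_polyC (c : MP) : Dj c%:P = (mderiv j c)%:P.
Proof. exact: map_polyC. Qed.

Lemma Dj_Xn n : Dj ('X^n : {poly MP}) = 0.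
Proof.
apply/polyP => i; rewrite coef_Dj coefXn coef0.
by case: (i == n); rewrite ?mderiv0 // -mpolyC1 mderivC.
Qed.

Lemma mderivX_eq (i : 'I_N) : mderiv j ('X_i : MP) = (i == j)%:R%:MP.
Proof.
rewrite mderivX mnm1E; case: eqP => [->|_]; last by rewrite scale0r.
have -> : (U_(j) - U_(j) = 0)%MM by apply/mnmP => k; rewrite mnmBE subnn mnm0E.
by rewrite mpolyX0 scale1r mpolyC1.
Qed.

Lemma Dj_genF : Dj G = 'X^(j.+1).
Proof.
rewrite /genF raddf_sum (bigD1 j) //= big1 ?addr0 => [|i ij].
  by rewrite Dj_mul Dj_polyC mderivX_eq eqxx Dj_Xn mulr0 addr0 mul1r.
by rewrite Dj_mul Dj_polyC mderivX_eq (negbTE ij) Dj_Xn mulr0 addr0 mul0r.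
Qed.

Lemma Dj_genF_exp n : Dj (G ^+ n) = G ^+ n.-1 * 'X^(j.+1) *+ n.
Proof.
elim: n => [|n IH]; first by rewrite expr0 mulr0n -polyC1 Dj_polyC mderivC polyC0.
rewrite exprS Dj_mul IH Dj_genF; case: n {IH} => [|n].
  by rewrite !expr0 mulr0n mulr0 addr0 mulr1 mul1r.
by rewrite /= !exprS; ring.
Qed.

Lemma Dj_exp_trunc M : Dj (exp_trunc C N M.+1) = 'X^(j.+1) * exp_trunc C N M.
Proof.
rewrite /exp_trunc raddf_sum big_ord_recl /= Dj_mul Dj_polyC mderivC
  Dj_genF_exp mulr0n mulr0 polyC0 mul0r !add0r mulr_sumr.
apply: eq_bigr => i _; rewrite Dj_mul Dj_polyC mderivC polyC0 mul0r add0r.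
rewrite Dj_genF_exp /= /bump /= add1n add0n mulrnAr -mulrnAl -polyCMn
  -mpolyCMn inv_factS.
by ring.
Qed.

Lemma mderiv_pol_p m :
  mderiv j (pol_p C N m) = if (j < m)%N then pol_p C N (m - j.+1) else 0.
Proof.
rewrite -(@coef_exp_trunc C N m.+1 m (ltnSn m)) -coef_Dj Dj_exp_trunc coefXnM.
case: (ltnP j m) => jm; last by rewrite ltnS jm.
by rewrite ltnNge jm /= coef_exp_trunc //; lia.
Qed.

Lemma pol_pz_neg (z : int) : z < 0 -> pol_pz C N z = 0.
Proof. by case: z. Qed.

Lemma mderiv_pol_pz (z : int) :
  mderiv j (pol_pz C N z) = pol_pz C N (z - (j.+1)%:Z).
Proof.
case: z => [m|m]; last by rewrite !pol_pz_neg ?mderiv0 // NegzE; lia.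
rewrite /= mderiv_pol_p; case: (ltnP j m) => jm; first by rewrite subzn.
by rewrite pol_pz_neg //; lia.
Qed.

End PartialDerivative.

Lemma mulrSn_eq0 (F : numFieldType) (V : lmodType F) (v : V) n :
  v *+ n.+1 = 0 -> v = 0.
Proof. by rewrite -scaler_nat => /eqP; rewrite scaler_eq0 pnatr_eq0 => /eqP. Qed.

Lemma deriv_1subX_geometric (R : comNzRingType) (x : R) n :
  (1 - x%:P * 'X)^`() + (1 - x%:P * 'X) * \sum_(j < n) (x ^+ j.+1)%:P * 'X^j
  = - ((x ^+ n.+1)%:P * 'X^n).
Proof.
have telescope m : (1 - x%:P * 'X) * \sum_(j < m) (x ^+ j.+1)%:P * 'X^j
    = x%:P - (x ^+ m.+1)%:P * 'X^m.
  elim: m => [|m IH]; first by rewrite big_ord0 mulr0 expr1 expr0 mulr1 subrr.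
  by rewrite big_ord_recr /= mulrDr IH !rmorphXn /= !exprS; ring.
by rewrite telescope derivB derivC deriv_mulC derivX sub0r mulr1; ring.
Qed.

Section MiwaSpecialization.
Variables (C : numFieldType) (N k : nat).
Local Notation MK := {mpoly C[k]}.
Local Notation PK := {poly MK}.
Local Notation ev := (comp_mpoly (miwa_pt C N k)).

Definition miwa_genF : PK := map_poly ev (genF C N).
Definition miwa_exp : PK := map_poly ev (exp_trunc C N N.+1).
Definition elem_gen : PK := \prod_(i < k) (1 - ('X_i)%:P * 'X).

Lemma miwa_expE :
  miwa_exp = \sum_(n < N.+1) (inv_fact C n)%:MP%:P * miwa_genF ^+ n.
Proof.
rewrite /miwa_exp /exp_trunc rmorph_sum; apply: eq_bigr => i _.
by rewrite rmorphM rmorphXn /= map_polyC /= comp_mpolyC.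
Qed.

Lemma miwa_genF_XM : miwa_genF = 'X * map_poly ev (genF_divX C N).
Proof. by rewrite /miwa_genF genF_XM rmorphM /= map_polyX. Qed.

Lemma comp_miwa_X (j : 'I_N) :
  ev 'X_j = ((j.+1)%:R^-1)%:MP * \sum_(i < k) 'X_i ^+ j.+1.
Proof. by rewrite comp_mpolyXU -tnth_nth tnth_mktuple. Qed.

Lemma deriv_miwa_genF :
  miwa_genF^`() = \sum_(i < k) \sum_(j < N) ('X_i ^+ j.+1)%:P * 'X^j.
Proof.
rewrite /miwa_genF /genF rmorph_sum raddf_sum /= exchange_big /=.
apply: eq_bigr => j _.
rewrite rmorphM /= map_polyC /= map_polyXn comp_miwa_X deriv_mulC derivXn /=.
rewrite mulrnAr -mulrnAl -polyCMn -mulrnAl -rmorphMn /= -mulr_natr.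
rewrite mulVf ?pnatr_eq0 // mpolyC1 mul1r rmorph_sum mulr_suml.
by apply: eq_bigr.
Qed.

(* E'/E = - sum_i x_i / (1 - x_i z) and miwa_genF' = sum_i x_i / (1 - x_i z) + O(z^N):
   E inverts exp(miwa_genF) = prod_i 1 / (1 - x_i z) to that order. *)
Lemma elem_gen_log_deriv :
  exists R : PK, elem_gen^`() + elem_gen * miwa_genF^`() = 'X^N * R.
Proof.
rewrite deriv_miwa_genF /elem_gen.
apply: (big_rec2 (fun E g => exists R : PK, E^`() + E * g = 'X^N * R)).
  by exists 0; rewrite derivC mulr0 addr0 mulr0.
move=> i E g _ [R HR].
exists ((1 - ('X_i)%:P * 'X) * R - E * ('X_i ^+ N.+1)%:P).
rewrite derivM.
transitivity ((1 - ('X_i)%:P * 'X) * (E^`() + E * g) +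
   E * ((1 - ('X_i)%:P * 'X)^`() + (1 - ('X_i)%:P * 'X) *
        \sum_(j < N) ('X_i ^+ j.+1)%:P * 'X^j)); first by ring.
by rewrite HR deriv_1subX_geometric; ring.
Qed.

Lemma deriv_miwa_exp :
  miwa_exp^`() =
  miwa_genF^`() * (miwa_exp - (inv_fact C N)%:MP%:P * miwa_genF ^+ N).
Proof.
have -> : miwa_exp - (inv_fact C N)%:MP%:P * miwa_genF ^+ N =
          \sum_(n < N) (inv_fact C n)%:MP%:P * miwa_genF ^+ n.
  by rewrite miwa_expE big_ord_recr /= addrK.
rewrite miwa_expE raddf_sum big_ord_recl /= deriv_mulC deriv_exp mulr0n mulr0.
rewrite add0r mulr_sumr; apply: eq_bigr => i _.
rewrite deriv_mulC deriv_exp /= /bump /= add1n mulrnAr -mulrnAl -polyCMn.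
by rewrite -rmorphMn /= inv_factS; ring.
Qed.

Lemma elem_gen_miwa_exp_deriv :
  exists T : PK, (elem_gen * miwa_exp)^`() = 'X^N * T.
Proof.
have [R HR] := elem_gen_log_deriv.
pose c : PK := ((inv_fact C N)%:MP)%:P.
exists (R * miwa_exp -
        elem_gen * miwa_genF^`() * c * map_poly ev (genF_divX C N) ^+ N).
rewrite derivM deriv_miwa_exp.
transitivity ((elem_gen^`() + elem_gen * miwa_genF^`()) * miwa_exp -
              elem_gen * miwa_genF^`() * c * miwa_genF ^+ N); first by ring.
by rewrite HR {2}miwa_genF_XM exprMn; ring.
Qed.

Lemma coef_elem_gen_miwa_exp r :
  (0 < r <= N)%N -> (elem_gen * miwa_exp)`_r = 0.
Proof.
case: r => // r /= rN; have [T HT] := elem_gen_miwa_exp_deriv.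
by apply: (@mulrSn_eq0 C _ _ r); rewrite -coef_deriv HT coefXnM rN.
Qed.

Lemma coef0_elem_gen : elem_gen`_0 = 1.
Proof.
apply: (big_ind (fun p : PK => p`_0 = 1)) => [|p q hp hq|i _].
- by rewrite coefC.
- by rewrite coef0M hp hq mulr1.
- by rewrite coefB coefC coefCM coefX mulr0 subr0.
Qed.

Lemma size_elem_gen : (size elem_gen <= k.+1)%N.
Proof.
rewrite /elem_gen -big_enum /= -[k in (_ <= k.+1)%N]size_enum_ord.
elim: (enum 'I_k) => [|i s IH]; first by rewrite big_nil size_poly1.
have size_factor : (size (1 - ('X_i : MK)%:P * 'X)%R <= 2)%N.
  apply: leq_trans (size_add _ _) _; rewrite size_poly1 size_opp geq_max /=.
  apply: leq_trans (size_mul_leq _ _) _; rewrite size_polyX.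
  by have := size_polyC_leq1 ('X_i : MK); lia.
rewrite big_cons; apply: leq_trans (size_mul_leq _ _) _.
by rewrite -subn1 leq_subLR; apply: leq_trans (leq_add size_factor IH) _.
Qed.

End MiwaSpecialization.

Lemma sum_ord_widen (V : nmodType) m M (F : nat -> V) : (m <= M)%N ->
  (forall s, (m <= s < M)%N -> F s = 0) ->
  \sum_(s < m) F s = \sum_(s < M) F s.
Proof.
move=> mM F0; rewrite -!(big_mkord xpredT) (big_cat_nat (leq0n m) mM) /=.
by rewrite [X in _ = _ + X]big1_seq ?addr0 // => i /andP[_]; rewrite mem_index_iota; apply: F0.
Qed.

Section CompleteSymmetricRecursion.
Variables (C : numFieldType) (N k : nat).
Local Notation MK := {mpoly C[k]}.
Local Notation E := (elem_gen C k).

(* p_z at t = [x_1] + ... + [x_k], i.e. the complete symmetric polynomial h_z(x), for z <= N *)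
Definition miwa_p (z : int) : MK :=
  if z is Posz n then (miwa_exp C N k)`_n else 0.

Lemma miwa_p_neg (z : int) : z < 0 -> miwa_p z = 0.
Proof. by case: z. Qed.

Lemma miwa_p_rec (r : int) : 1 <= r <= N%:Z ->
  miwa_p r = - \sum_(s < k) E`_s.+1 * miwa_p (r - (s.+1)%:Z).
Proof.
case: r => // n; rewrite !lez_nat => /andP[n_gt0 nN].
have : \sum_(s < k.+1) E`_s * miwa_p (n%:Z - s%:Z) = 0.
  rewrite -[RHS](@coef_elem_gen_miwa_exp C N k n); last by rewrite n_gt0 nN.
  rewrite coefM (@sum_ord_widen _ k.+1 (n + k).+1
    (fun s => E`_s * miwa_p (n%:Z - s%:Z))); first last.
  - by move=> s /andP[ks _]; rewrite nth_default ?mul0r // (leq_trans (size_elem_gen _ _)).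
  - lia.
  rewrite [RHS](eq_bigr (fun s : 'I_n.+1 => E`_s * miwa_p (n%:Z - s%:Z))).
    rewrite (@sum_ord_widen _ n.+1 (n + k).+1
      (fun s => E`_s * miwa_p (n%:Z - s%:Z))) // => [|s /andP[ns _]]; first lia.
    by rewrite miwa_p_neg ?mulr0 //; lia.
  by move=> s _; rewrite subzn // -ltnS.
rewrite big_ord_recl coef0_elem_gen mul1r subr0 => /eqP.
by rewrite addr_eq0 => /eqP ->.
Qed.

Variable l : nat.

Definition miwa_row (c : int) : 'rV[MK]_l := \row_(j < l) miwa_p (c + j%:Z).

Definition miwa_base : 'M[MK]_(k, l) :=
  \matrix_(s < k, j < l) miwa_p (j%:Z - s%:Z).

Lemma miwa_row_in_span (c : int) : 1 - k%:Z <= c -> c + l%:Z <= N%:Z + 1 ->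
  exists u : 'rV[MK]_k, miwa_row c = u *m miwa_base.
Proof.
have [n c_lt] : exists n : nat, c < n%:Z + 1 - k%:Z.
  by exists (`|c|%N + k)%N; have := abszE c; have := ler_norm c; lia.
elim: n c c_lt => [|n IH] c c_lt c_ge c_le; first lia.
have [c_le0|c_gt0] := lerP c 0.
  have abs_c : (`|c|%N : int) = - c by rewrite lez0_abs.
  have abs_c_lt : (`|c|%N < k)%N by rewrite -ltz_nat abs_c; lia.
  exists (delta_mx 0 (Ordinal abs_c_lt)); rewrite -rowE; apply/rowP => j.
  by rewrite !mxE /= abs_c opprK addrC.
have /fin_all_exists[U HU] : forall s : 'I_k,
    exists u : 'rV[MK]_k, miwa_row (c - (s.+1)%:Z) = u *m miwa_base.
  by move=> s; apply: IH; have := ltn_ord s; lia.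
exists (- \sum_(s < k) E`_s.+1 *: U s).
rewrite mulNmx mulmx_suml; apply/rowP => j.
rewrite !mxE miwa_p_rec; last by have := ltn_ord j; lia.
congr (- _); rewrite summxE; apply: eq_bigr => s _.
by rewrite -scalemxAl -HU !mxE; congr (_ * miwa_p _); lia.
Qed.

End CompleteSymmetricRecursion.

Lemma det_eq0_rows_submx (F : fieldType) l k (M : 'M[F]_l) (W : 'M[F]_(k, l))
    (S : {set 'I_l}) :
  (k < #|S|)%N -> (forall i, i \in S -> (row i M <= W)%MS) -> \det M = 0.
Proof.
move=> kS MW; pose f (x : 'I_k.+1) : 'I_l := enum_val (widen_ord kS x).
have f_inj : injective f.
  by move=> x y /enum_val_inj/(congr1 val) /= xy; apply: val_inj.
have rank_le : (\rank (rowsub f M) <= k)%N.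
  apply: leq_trans (rank_leq_row W); apply: mxrankS; apply/row_subP => x.
  by rewrite row_rowsub MW // enum_valP.
apply/eqP; apply: contraTT rank_le => detM; rewrite -ltnNge.
have rowsub_colsub : rowsub f (1%:M : 'M[F]_l) *m colsub f 1%:M = 1%:M.
  by rewrite -rowsubE; apply/matrixP => x y; rewrite !mxE (inj_eq f_inj).
rewrite rowsubE mxrankMfree ?row_free_unit ?unitmxE ?unitfE //.
apply: leq_trans (mxrankM_maxl _ (colsub f 1%:M)).
by rewrite rowsub_colsub mxrank1.
Qed.

Lemma det_eq0_rows_in_span (R : idomainType) l k (M : 'M[R]_l)
    (W : 'M[R]_(k, l)) (S : {set 'I_l}) :
  (k < #|S|)%N -> (forall i, i \in S -> exists u : 'rV_k, row i M = u *m W) ->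
  \det M = 0.
Proof.
move=> kS MW; apply/eqP; rewrite -tofrac_eq0 -det_map_mx; apply/eqP.
apply: (det_eq0_rows_submx (W := map_mx (@tofrac R) W) kS) => i /MW[u Mu].
by rewrite -map_row Mu map_mxM submxMl.
Qed.

Lemma path_ltn_nth_gt x (s : seq nat) j :
  path ltn x s -> (j < size s)%N -> (x + j < nth 0 s j)%N.
Proof.
elim: s x j => [|y s IH] x [|j] //= /andP[xy ys] js; first lia.
by have := IH y j ys js; lia.
Qed.

Lemma sorted_ltn_nth_geq (s : seq nat) j :
  sorted ltn s -> (j < size s)%N -> (j <= nth 0 s j)%N.
Proof.
case: s => // y s ys; case: j => //= j js.
by have := path_ltn_nth_gt ys js; lia.
Qed.

Lemma nth_sort_uniq_geq (s : seq nat) j :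
  uniq s -> (j < size (sort leq s))%N -> (j <= nth 0 (sort leq s) j)%N.
Proof.
move=> s_uniq; apply: sorted_ltn_nth_geq.
by rewrite ltn_sorted_uniq_leq sort_uniq s_uniq sort_sorted //; apply: leq_total.
Qed.

Lemma sum_ord_leq_sum_uniq (s : seq nat) :
  uniq s -> (\sum_(j < size s) j <= \sum_(x <- s) x)%N.
Proof.
move=> s_uniq; rewrite -(perm_big _ (permEl (perm_sort leq s))) /=.
rewrite -(size_sort leq s) (big_nth 0) big_mkord.
by apply: leq_sum => j _; apply: nth_sort_uniq_geq s_uniq (ltn_ord j).
Qed.

Lemma sum_uniq_leq_sum_ord (mu : nat -> nat) (s : seq nat) :
  {homo mu : i j /~ (i <= j)%N} -> uniq s ->
  (\sum_(x <- s) mu x <= \sum_(j < size s) mu j)%N.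
Proof.
move=> mu_noninc s_uniq; rewrite -(perm_big _ (permEl (perm_sort leq s))) /=.
rewrite -(size_sort leq s) (big_nth 0) big_mkord.
by apply: leq_sum => j _; apply/mu_noninc/(nth_sort_uniq_geq s_uniq (ltn_ord j)).
Qed.

Lemma sum_ord_leq_sum_inj (I : finType) (A : {pred I}) (t : I -> nat) :
  {in A &, injective t} -> (\sum_(j < #|A|) j <= \sum_(i in A) t i)%N.
Proof.
move=> t_inj; have := @sum_ord_leq_sum_uniq [seq t i | i <- enum A].
rewrite map_inj_in_uniq ?enum_uniq; last by move=> i j; rewrite !mem_enum; apply: t_inj.
by rewrite size_map -cardE big_map big_enum => /(_ isT).
Qed.

Lemma sum_inj_leq_sum_ord (I : finType) (A : {pred I}) (t : I -> nat)
    (mu : nat -> nat) :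
  {homo mu : i j /~ (i <= j)%N} -> {in A &, injective t} ->
  (\sum_(i in A) mu (t i) <= \sum_(j < #|A|) mu j)%N.
Proof.
move=> mu_noninc t_inj; have := @sum_uniq_leq_sum_ord mu [seq t i | i <- enum A].
rewrite map_inj_in_uniq ?enum_uniq; last by move=> i j; rewrite !mem_enum; apply: t_inj.
by rewrite size_map -cardE big_map big_enum => /(_ mu_noninc isT).
Qed.

Lemma sum_ord_id_addn s n :
  (\sum_(j < s + n) j = \sum_(j < s) j + \sum_(j < n) j + s * n)%N.
Proof.
elim: n => [|n IH]; first by rewrite big_ord0 muln0 !addn0.
rewrite addnS !big_ord_recr /= IH mulnS.
by set A := (\sum_(j < s) j)%N; set B := (\sum_(j < n) j)%N; lia.
Qed.

Lemma leq_sum_ord_widen (mu : nat -> nat) a b : (a <= b)%N ->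
  (\sum_(j < a) mu j <= \sum_(j < b) mu j)%N.
Proof.
move=> ab; rewrite -!(big_mkord xpredT) (big_cat_nat (leq0n a) ab) /=.
exact: leq_addr.
Qed.

Lemma Posz_sum (I : Type) (r : seq I) (P : pred I) (F : I -> nat) :
  ((\sum_(i <- r | P i) F i)%N)%:Z = \sum_(i <- r | P i) (F i)%:Z.
Proof. exact: (big_morph Posz PoszD (erefl 0%:Z)). Qed.

Section DisplacementBound.
Variables (l k : nat) (mu : nat -> nat) (c : nat -> int).
Hypothesis k_le_l : (k <= l)%N.
Hypothesis mu_noninc : {homo mu : i j /~ (i <= j)%N}.
Hypothesis c_le : forall i : 'I_l, c i <= (mu i)%:Z - (i : nat)%:Z.
Hypothesis c_inj : injective (fun i : 'I_l => c i).
Let T := [set i : 'I_l | 1 - k%:Z <= c i].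
Hypothesis card_T : (#|T| <= k)%N.

Lemma sum_c_in_T :
  \sum_(i in T) c i <= ((\sum_(j < k) mu j)%N)%:Z - ((\sum_(j < #|T|) j)%N)%:Z.
Proof.
apply: le_trans (_ : \sum_(i in T) ((mu i)%:Z - (i : nat)%:Z) <= _).
  by apply: ler_sum => i _; apply: c_le.
rewrite sumrB -!Posz_sum lerB // lez_nat.
  apply: leq_trans (leq_sum_ord_widen mu card_T).
  exact: (sum_inj_leq_sum_ord mu_noninc (in2W val_inj)).
exact: (sum_ord_leq_sum_inj (in2W val_inj)).
Qed.

(* below 1 - k the distinct values c i are -k - t i with distinct t i >= 0 *)
Lemma sum_c_notin_T :
  \sum_(i in ~: T) c i <=
  - ((#|~: T| * k)%N)%:Z - ((\sum_(j < #|~: T|) j)%N)%:Z.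
Proof.
pose t (i : 'I_l) : nat := `|- c i - k%:Z|%N.
have cE i : i \in ~: T -> c i = - k%:Z - (t i)%:Z.
  rewrite !inE -ltNge /t => ci_lt.
  by rewrite gez0_abs; lia.
rewrite (eq_bigr _ cE) sumrB.
have -> : \sum_(i in ~: T) - k%:Z = - ((#|~: T| * k)%N)%:Z.
  by rewrite sumr_const mulNrn pmulrn mulrzz PoszM mulrC.
rewrite lerB // -Posz_sum lez_nat.
apply: sum_ord_leq_sum_inj => i j iT jT tij; apply: c_inj.
by rewrite /= (cE _ iT) (cE _ jT) tij.
Qed.

Lemma displacement_bound :
  ((\sum_(k <= i < l) mu i)%N)%:Z <=
  \sum_(i < l) ((mu i)%:Z - (i : nat)%:Z - c i).
Proof.
have card_TC : (#|T| + #|~: T| = l)%N by rewrite cardsC card_ord.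
have split_mu : ((\sum_(i < l) mu i)%N)%:Z =
    ((\sum_(j < k) mu j)%N)%:Z + ((\sum_(k <= i < l) mu i)%N)%:Z.
  by rewrite -PoszD -!(big_mkord xpredT) -(big_cat_nat (leq0n k) k_le_l).
have split_c : \sum_(i < l) c i = \sum_(i in T) c i + \sum_(i in ~: T) c i.
  by rewrite (bigID (mem T)) /=; congr (_ + _); apply: eq_bigl => i; rewrite !inE.
have := sum_ord_id_addn #|T| #|~: T|; rewrite card_TC => sum_l.
rewrite !sumrB -!Posz_sum split_mu sum_l split_c.
have := sum_c_in_T; have := sum_c_notin_T.
have : (#|T| * #|~: T| <= #|~: T| * k)%N by rewrite mulnC leq_mul2l card_T orbT.
by rewrite !PoszD; lia.
Qed.

End DisplacementBound.

Section DerivativeDeterminant.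
Variables (C : numFieldType) (N : nat) (j : 'I_N).
Local Notation MP := {mpoly C[N]}.

Lemma mderiv_prod (I : eqType) (r : seq I) (F : I -> MP) : uniq r ->
  mderiv j (\prod_(i <- r) F i) =
  \sum_(i <- r) mderiv j (F i) * \prod_(i' <- r | i' != i) F i'.
Proof.
elim: r => [|x r IH] /=; first by rewrite !big_nil -mpolyC1 mderivC.
case/andP => x_notin_r r_uniq; rewrite big_cons mderivM IH // [RHS]big_cons.
congr (_ + _).
  rewrite big_cons eqxx /=; congr (_ * _).
  rewrite [RHS]big_seq_cond [LHS]big_seq_cond; apply: eq_bigl => i.
  case: (boolP (i \in r)) => //= ir; apply/esym/negP => /eqP eix.
  by move: x_notin_r; rewrite -eix ir.
rewrite mulr_sumr !big_seq; apply: eq_bigr => i ir.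
rewrite big_cons ifT; first by rewrite mulrCA.
by apply/negP => /eqP exi; move: x_notin_r; rewrite exi ir.
Qed.

Lemma mderiv_det l (A : 'M[MP]_l) :
  mderiv j (\det A) = \sum_(i < l)
    \det (\matrix_(i', j') (if i' == i then mderiv j (A i' j') else A i' j')).
Proof.
have mderiv_sign (s : 'S_l) : mderiv j ((-1) ^+ s : MP) = 0.
  by case: (odd_perm s); rewrite /= ?expr1 ?expr0 ?mderivN -mpolyC1 mderivC ?oppr0.
rewrite /determinant raddf_sum /= (eq_bigr (fun s : 'S_l => \sum_(i < l)
    (-1) ^+ s * (mderiv j (A i (s i)) * \prod_(i' < l | i' != i) A i' (s i')))).
  rewrite exchange_big /=; apply: eq_bigr => i _; apply: eq_bigr => s _.
  congr (_ * _); rewrite [RHS](bigD1 i) //= !mxE eqxx; congr (_ * _).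
  by apply: eq_bigr => i' ii; rewrite !mxE (negbTE ii).
move=> s _; rewrite mderivM mderiv_sign mul0r add0r.
by rewrite (mderiv_prod (fun i : 'I_l => A i (s i)) (index_enum_uniq _)) mulr_sumr.
Qed.

(* the Jacobi-Trudi-type determinant det (p_(c_i + j)); s_mu is the case c_i = mu_i - i *)
Definition jt_det (l : nat) (c : nat -> int) : MP :=
  \det (\matrix_(i < l, j' < l) pol_pz C N (c i + (j' : nat)%:Z)).

Definition lower_at (c : nat -> int) (i m : nat) : nat -> int :=
  fun i' => if i' == i then c i' - m%:Z else c i'.

Lemma mderiv_jt_det l c :
  mderiv j (jt_det l c) = \sum_(i < l) jt_det l (lower_at c i j.+1).
Proof.
rewrite /jt_det mderiv_det; apply: eq_bigr => i _; congr determinant.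
apply/matrixP => i' j'; rewrite !mxE /lower_at.
case: (i' =P i) => [->|ne]; first by rewrite eqxx mderiv_pol_pz; congr pol_pz; lia.
by rewrite ifF //; apply/eqP => /val_inj.
Qed.

End DerivativeDeterminant.

Lemma wtD N (m1 m2 : 'X_{1..N}) : wt (m1 + m2)%MM = (wt m1 + wt m2)%N.
Proof. by rewrite /wt -big_split /=; apply: eq_bigr => i _; rewrite mnmDE mulnDr. Qed.

Lemma wtU N (j : 'I_N) : wt U_(j)%MM = j.+1.
Proof.
rewrite /wt (bigD1 j) //= mnm1E eqxx muln1 big1 ?addn0 // => i ij.
by rewrite mnm1E eq_sym (negbTE ij) muln0.
Qed.

Lemma wt0 N : wt (0%MM : 'X_{1..N}) = 0%N.
Proof. by rewrite /wt big1 // => i _; rewrite mnm0E muln0. Qed.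

Section VanishingAtMiwaPoint.
Variables (C : numFieldType) (N k l : nat) (mu : nat -> nat).
Hypothesis k_le_l : (k <= l)%N.
Hypothesis mu_noninc : {homo mu : i j /~ (i <= j)%N}.
Hypothesis mu_bound : forall i, (i < l)%N -> (mu i + l <= N.+1)%N.
Let a (i : nat) : int := (mu i)%:Z - i%:Z.

Lemma comp_miwa_pol_pz (z : int) : z <= N%:Z ->
  pol_pz C N z \mPo miwa_pt C N k = miwa_p C N k z.
Proof.
case: z => [n|n] z_le /=; last by rewrite comp_mpoly0.
by rewrite /miwa_exp coef_map_id0 ?comp_mpoly0 // coef_exp_trunc //; lia.
Qed.

Lemma comp_miwa_jt_det_eq0 (c : nat -> int) :
  (forall i : 'I_l, c i <= a i) ->
  \sum_(i < l) (a i - c i) < ((\sum_(k <= i < l) mu i)%N)%:Z ->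
  jt_det C N l c \mPo miwa_pt C N k = 0.
Proof.
move=> c_le drop_lt.
have c_bound (i : 'I_l) : c i + l%:Z <= N%:Z + 1.
  by have := c_le i; have := mu_bound (ltn_ord i); rewrite /a; lia.
rewrite /jt_det -det_map_mx.
have [/injectiveP c_inj|/injectivePn[i1 [i2 i12 c12]]] :=
  boolP (injectiveb (fun i : 'I_l => c i)); last first.
  by apply: (determinant_alternate i12) => j; rewrite !mxE c12.
apply: (det_eq0_rows_in_span (W := miwa_base C N k l)
          (S := [set i : 'I_l | 1 - k%:Z <= c i])).
  rewrite ltnNge; apply/negP => card_T.
  have := displacement_bound k_le_l mu_noninc c_le c_inj card_T.
  by move: drop_lt; rewrite /a; lia.
move=> i; rewrite inE => c_ge.
have [u rowE] := @miwa_row_in_span C N k l (c i) c_ge (c_bound i).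
exists u; rewrite -rowE; apply/rowP => j; rewrite !mxE; apply: comp_miwa_pol_pz.
by have := c_bound i; have := ltn_ord j; lia.
Qed.

Lemma sum_drop_lower_at (c : nat -> int) (i : 'I_l) m :
  \sum_(i' < l) (a i' - lower_at c i m i') = \sum_(i' < l) (a i' - c i') + m%:Z.
Proof.
rewrite (bigD1 i) //= [in RHS](bigD1 i) //= /lower_at eqxx.
rewrite (eq_bigr (fun i' : 'I_l => a i' - c i')); first by ring.
by move=> i' i'i; rewrite ifF //; apply/negbTE.
Qed.

(* each t_j-derivative lowers one index c_i by j + 1, so the total drop grows by wt alpha *)
Lemma deriv_eval_jt_det_eq0 (alpha : 'X_{1..N}) (c : nat -> int) :
  (forall i : 'I_l, c i <= a i) ->
  \sum_(i < l) (a i - c i) + (wt alpha)%:Z < ((\sum_(k <= i < l) mu i)%N)%:Z ->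
  deriv_eval k alpha (jt_det C N l c) = 0.
Proof.
have [n] := ubnP (mdeg alpha).
elim: n alpha c => // n IH alpha c alpha_lt c_le drop_lt.
have [j alpha_j|alpha0] := pickP (fun j : 'I_N => 0 < alpha j)%N; last first.
  have alpha_eq0 : alpha = 0%MM.
    by apply/mnmP => i; rewrite mnm0E; have := alpha0 i; rewrite /=; lia.
  move: drop_lt; rewrite /deriv_eval alpha_eq0 wt0 addr0 mderivm0m.
  exact: comp_miwa_jt_det_eq0.
set alpha' := (alpha - U_(j))%MM.
have alphaE : alpha = (U_(j) + alpha')%MM.
  rewrite mpoly.addmC submK //; apply/mnm_lepP => i; rewrite mnm1E.
  by case: eqP => [<-|].
rewrite /deriv_eval alphaE mderivmDm mderivmU1m mderiv_jt_det !raddf_sum /=.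
apply: big1 => i _; apply: IH.
- by move: alpha_lt; rewrite alphaE mdegD mdeg1.
- by move=> i'; rewrite /lower_at; case: eqP => _; have := c_le i'; lia.
- by rewrite sum_drop_lower_at; move: drop_lt; rewrite alphaE wtD wtU; lia.
Qed.

End VanishingAtMiwaPoint.

Lemma sumn_drop (s : seq nat) k L : (size s <= L)%N ->
  sumn (drop k s) = (\sum_(k <= i < L) nth 0 s i)%N.
Proof.
elim: s k L => [|x s IH] k L /=.
  by move=> _; rewrite big1 // => i _; rewrite nth_nil.
case: L => // L; rewrite ltnS => sL; case: k => [|k].
  by rewrite drop0 /= big_nat_recl //= -(IH 0) ?drop0.
by rewrite /= big_add1 /= (IH k L sL).
Qed.

Lemma nth_leq_sumn (s : seq nat) i : (nth 0 s i <= sumn s)%N.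
Proof.
elim: s i => [|x s IH] [|i] //=; first exact: leq_addr.
exact: leq_trans (IH i) (leq_addl _ _).
Qed.

Lemma size_leq_sumn (s : seq nat) : all (fun x => 0 < x)%N s -> (size s <= sumn s)%N.
Proof. by elim: s => //= x s IH /andP[x_gt0 /IH]; lia. Qed.

Lemma nth_sorted_geq_noninc (s : seq nat) :
  sorted geq s -> {homo nth 0 s : i j /~ (i <= j)%N}.
Proof.
move=> s_sorted i j ji; have [i_lt|i_ge] := ltnP i (size s); last first.
  by rewrite (nth_default 0 i_ge).
apply: (sorted_leq_nth (rev_trans leq_trans) leqnn 0 s_sorted); rewrite // inE.
exact: leq_ltn_trans ji i_lt.
Qed.

Lemma part_le_size (lam mu : seq nat) :
  all (fun x => 0 < x)%N lam -> part_le lam mu -> (size lam <= size mu)%N.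
Proof.
move=> lam_pos lam_le; rewrite leqNgt; apply/negP => mu_lt.
have lam_gt0 := allP lam_pos _ (mem_nth 0 mu_lt).
have := allP lam_le (size mu).
rewrite mem_iota leq0n add0n mu_lt (nth_default 0 (leqnn _)) => /(_ isT).
by move: lam_gt0 => /= pos /(leq_trans pos); rewrite ltnn.
Qed.

Lemma deriv_eval_schur_eq0 (C : numFieldType) (lam mu : seq nat) k N
    (alpha : 'X_{1..N}) :
  is_partition lam -> is_partition mu -> part_le lam mu -> (k < size lam)%N ->
  (sumn mu + sumn mu <= N)%N -> (wt alpha < Nlk lam k)%N ->
  deriv_eval k alpha (schur C N mu) = 0.
Proof.
move=> /andP[_ lam_pos] /andP[mu_sorted mu_pos] lam_le k_lt mu_small wt_lt.
have mu_noninc := nth_sorted_geq_noninc mu_sorted.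
have size_le := part_le_size lam_pos lam_le.
have lam_le_mu i : (i < size lam)%N -> (nth 0 lam i <= nth 0 mu i)%N.
  by move=> i_lt; move/allP: lam_le; apply; rewrite mem_iota.
have mu_bound i : (i < size mu)%N -> (nth 0 mu i + size mu <= N.+1)%N.
  by move=> _; have := nth_leq_sumn mu i; have := size_leq_sumn mu_pos; lia.
have N_le : (Nlk lam k <= \sum_(k <= i < size mu) nth 0 mu i)%N.
  rewrite /Nlk (sumn_drop k size_le); apply: leq_sum => i _.
  by have [/lam_le_mu //|i_ge] := ltnP i (size lam); rewrite nth_default.
have k_le : (k <= size mu)%N by lia.
have -> : schur C N mu = jt_det C N (size mu) (fun i => (nth 0 mu i)%:Z - i%:Z) by [].
apply: (deriv_eval_jt_det_eq0 C k_le mu_noninc mu_bound) => [i|]; first exact: lexx.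
rewrite big1 ?add0r ?ltz_nat => [|i _]; last exact: subrr.
exact: leq_trans wt_lt N_le.
Qed.

Lemma strip_partition D (m : D.-tuple 'I_D.+1) :
  padded_part m -> is_partition (strip m).
Proof.
move=> /andP[m_sorted _]; rewrite /is_partition /strip -filter_map.
rewrite sorted_filter //=; last exact: rev_trans leq_trans.
by apply/allP => x; rewrite mem_filter => /andP[].
Qed.

Lemma sumn_strip D (m : D.-tuple 'I_D.+1) : padded_part m -> sumn (strip m) = D.
Proof.
move=> /andP[_ /eqP {2}<-]; rewrite /strip -filter_map.
by elim: [seq val i | i <- m] => //= -[|x] s IH //=; rewrite IH.
Qed.

Theorem proposition3p1 (R : realType) (lam : seq nat) (xi : seq nat -> R[i])
    (k : nat) :
  is_partition lam -> (k < size lam)%N ->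
  forall (D N : nat), (D + D <= N)%N ->
  forall alpha : 'X_{1..N}, (wt alpha < Nlk lam k)%N ->
  deriv_eval k alpha (tau_part lam xi N D) = 0.
Proof.
move=> lam_part k_lt D N DN alpha wt_lt.
rewrite /deriv_eval /tau_part !raddf_sum /=; apply: big1 => m /andP[m_padded lam_le].
have := deriv_eval_schur_eq0 R[i] lam_part (strip_partition m_padded) lam_le k_lt.
rewrite sumn_strip // => /(_ N alpha DN wt_lt) schur_eq0.
by rewrite mderivmZ comp_mpolyZ -/(deriv_eval k alpha _) schur_eq0 scaler0.
Qed.
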